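(* Let $X$ be a topological space in which every point has a fundamental system of compact neighbourhoods, and let $L\subset X$ be a compact subspace which is separated in $X$. Then $L$ admits an open neighbourhood in $X$ which is Hausdorff.
   Context: Compact means quasi-compact and Hausdorff (Bourbaki's convention). A subset $A\subset X$ is separated in $X$ if any two distinct points of $A$ admit disjoint open neighbourhoods in $X$. *)

From Stdlib Require Import List.

Set Implicit Arguments.

Record topology (X : Type) := Topology {
  is_open : (X -> Prop) -> Prop;
  open_full : is_open (fun _ => True);
  open_inter : forall U V, is_open U -> is_open V -> is_open (fun x => U x /\ V x);
  open_union : forall (I : Type) (F : I -> X -> Prop),
      (forall i, is_open (F i)) -> is_open (fun x => exists i, F i x)
}.

Section Topo.
Variables (X : Type) (T : topology X).

Definition subset (A B : X -> Prop) : Prop := forall x, A x -> B x.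

Definition nbhd (x : X) (N : X -> Prop) : Prop :=
  exists U, is_open T U /\ U x /\ subset U N.

Definition open_nbhd_of_set (L U : X -> Prop) : Prop :=
  is_open T U /\ subset L U.

(* The subspace A (with the induced topology) is quasi-compact: every cover of A
   by open sets of the subspace (i.e. traces on A of open sets of X) admits a
   finite subcover. *)
Definition quasi_compact (A : X -> Prop) : Prop :=
  forall (I : Type) (F : I -> X -> Prop),
    (forall i, is_open T (F i)) ->
    (forall x, A x -> exists i, F i x) ->
    exists s : list I, forall x, A x -> exists i, In i s /\ F i x.

(* The subspace A (with the induced topology) is Hausdorff: two distinct points
   of A have disjoint open neighbourhoods in A (traces of open sets of X). *)
Definition hausdorff_subspace (A : X -> Prop) : Prop :=
  forall x y, A x -> A y -> x <> y ->
    exists U V, is_open T U /\ is_open T V /\ U x /\ V y /\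
      (forall z, A z -> U z -> V z -> False).

(* Bourbaki: compact = quasi-compact and Hausdorff *)
Definition compact_subspace (A : X -> Prop) : Prop :=
  quasi_compact A /\ hausdorff_subspace A.

Definition separated_in (A : X -> Prop) : Prop :=
  forall x y, A x -> A y -> x <> y ->
    exists U V, is_open T U /\ is_open T V /\ U x /\ V y /\
      (forall z, U z -> V z -> False).

Definition locally_compact_nbhds : Prop :=
  forall x N, nbhd x N ->
    exists K, nbhd x K /\ compact_subspace K /\ subset K N.

End Topo.

(* Call two open sets A, B separating when any two distinct points y in A,
   z in B have disjoint open neighbourhoods.  Every point of L lies in a
   separating pair (A, A): take for A the interior of a compact neighbourhood,
   whose Hausdorff property gives the separation.  Two distinct points of L lie
   in a separating pair because L is separated in X.  Quasi-compactness of L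
   then lets one swap quantifiers twice, as in the proof that compact sets of
   a Hausdorff space are closed: first for a fixed x in L one gets a separating
   pair (A, W) with x in A and L inside W, then a separating pair (W, U) with
   L inside both.  Their intersection is a Hausdorff open neighbourhood of L. *)
From Stdlib Require Import List Classical FunctionalExtensionality PropExtensionality.

Set Implicit Arguments.

Section SeparatingPairs.
Variables (X : Type) (T : topology X).

Lemma open_ext (U V : X -> Prop) :
  (forall x, U x <-> V x) -> is_open T U -> is_open T V.
Proof.
  intros HUV HU.
  replace V with U; [exact HU|].
  apply functional_extensionality; intro x; apply propositional_extensionality, HUV.
Qed.

Lemma open_finite_inter (I : Type) (G : I -> X -> Prop) (s : list I) :
  (forall i, is_open T (G i)) -> is_open T (fun x => forall i, In i s -> G i x).
Proof.
  intros HG; induction s as [|j s IH].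
  - apply (open_ext (fun _ => True)); [simpl; tauto | apply open_full].
  - apply (open_ext (fun x => G j x /\ forall i, In i s -> G i x)).
    + intro x; split.
      * intros [Hj Hs] i [<-|Hi]; auto.
      * intro H; split; [apply H; left | intros i Hi; apply H; right]; auto.
    + apply open_inter; auto.
Qed.

Lemma open_finite_union (I : Type) (G : I -> X -> Prop) (s : list I) :
  (forall i, is_open T (G i)) -> is_open T (fun x => exists i, In i s /\ G i x).
Proof.
  intros HG.
  apply (open_ext (fun x => exists j : {i | In i s}, G (proj1_sig j) x)).
  - intro x; split.
    + intros [[i Hi] Hx]; exists i; auto.
    + intros [i [Hi Hx]]; exists (exist _ i Hi); auto.
  - apply (open_union T (fun j : {i | In i s} => G (proj1_sig j))); auto.
Qed.

Definition points_separated (y z : X) : Prop :=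
  y <> z -> exists U V, is_open T U /\ is_open T V /\ U y /\ V z /\
    (forall w, U w -> V w -> False).

Definition separated_sets (A B : X -> Prop) : Prop :=
  forall y z, A y -> B z -> points_separated y z.

Lemma points_separated_sym (y z : X) : points_separated y z -> points_separated z y.
Proof.
  intros H Hzy.
  destruct H as [U [V [HU [HV [Uy [Vz Hd]]]]]]; [congruence|].
  exists V, U; repeat split; auto.
  intros w Vw Uw; exact (Hd w Uw Vw).
Qed.

Lemma separated_sets_sym (A B : X -> Prop) : separated_sets A B -> separated_sets B A.
Proof. intros H y z By Az; apply points_separated_sym, H; assumption. Qed.

Lemma locally_compact_separated_nbhd (x : X) :
  locally_compact_nbhds T ->
  exists V, is_open T V /\ V x /\ separated_sets V V.
Proof.
  intros Hlc.
  assert (Hfull : nbhd T x (fun _ => True)).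
  { exists (fun _ => True); repeat split; try apply open_full; intros ? ?; auto. }
  destruct (Hlc x _ Hfull) as [K [[V [HV [Vx VK]]] [[_ HK] _]]].
  exists V; repeat split; auto.
  intros y z Vy Vz Hyz.
  destruct (HK y z (VK y Vy) (VK z Vz) Hyz) as [U1 [V1 [HU1 [HV1 [U1y [V1z Hd]]]]]].
  (* Intersecting with V makes the trace-disjointness in K a genuine one. *)
  exists (fun w => U1 w /\ V w), (fun w => V1 w /\ V w).
  repeat split; auto using open_inter.
  intros w [U1w Vw] [V1w _]; exact (Hd w (VK w Vw) U1w V1w).
Qed.

Lemma separated_in_separating_pair (L : X -> Prop) (x x' : X) :
  locally_compact_nbhds T -> separated_in T L -> L x -> L x' ->
  exists A B, is_open T A /\ is_open T B /\ A x /\ B x' /\ separated_sets A B.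
Proof.
  intros Hlc Hsep Hx Hx'.
  destruct (classic (x = x')) as [<-|Hne].
  - destruct (locally_compact_separated_nbhd x Hlc) as [V [HV [Vx HVV]]].
    exists V, V; repeat split; auto.
  - destruct (Hsep x x' Hx Hx' Hne) as [P [Q [HP [HQ [Px [Qx' Hd]]]]]].
    exists P, Q; repeat split; auto.
    intros y z Py Qz _; exists P, Q; auto.
Qed.

Record separating_pair (S : X -> Prop) := SeparatingPair {
  pair_left : X -> Prop;
  pair_right : X -> Prop;
  pair_left_open : is_open T pair_left;
  pair_right_open : is_open T pair_right;
  pair_left_contains : subset S pair_left;
  pair_separated : separated_sets pair_left pair_right
}.

Lemma quasi_compact_separating_pair (S L : X -> Prop) :
  quasi_compact T L ->
  (forall x, L x -> exists A B, is_open T A /\ is_open T B /\ subset S A /\ B x /\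
     separated_sets A B) ->
  exists A W, is_open T A /\ is_open T W /\ subset S A /\ subset L W /\
    separated_sets A W.
Proof.
  intros HL Hloc.
  destruct (HL (separating_pair S) (@pair_right S)) as [s Hs].
  - exact (@pair_right_open S).
  - intros x Hx.
    destruct (Hloc x Hx) as [A [B [HA [HB [SA [Bx HAB]]]]]].
    exists (SeparatingPair HA HB SA HAB); exact Bx.
  - exists (fun y => forall p, In p s -> pair_left p y),
      (fun z => exists p, In p s /\ pair_right p z).
    repeat split.
    + apply open_finite_inter, pair_left_open.
    + apply open_finite_union, pair_right_open.
    + intros y Sy p _; exact (pair_left_contains p y Sy).
    + exact Hs.
    + intros y z Hy [p [Hp Hz]]; exact (pair_separated p (Hy p Hp) Hz).
Qed.

Lemma point_compact_separating_pair (L : X -> Prop) (x : X) :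
  locally_compact_nbhds T -> quasi_compact T L -> separated_in T L -> L x ->
  exists A W, is_open T A /\ is_open T W /\ A x /\ subset L W /\ separated_sets A W.
Proof.
  intros Hlc HL Hsep Hx.
  destruct (quasi_compact_separating_pair (S := fun y => y = x) HL)
    as [A [W [HA [HW [xA [LW HAW]]]]]].
  - intros x' Hx'.
    destruct (separated_in_separating_pair x x' Hlc Hsep Hx Hx')
      as [A [B [HA [HB [Ax [Bx' HAB]]]]]].
    exists A, B; repeat split; auto.
    intros y ->; exact Ax.
  - exists A, W; repeat split; auto.
Qed.

End SeparatingPairs.

Theorem proposition6p12 (X : Type) (T : topology X) (L : X -> Prop) :
  locally_compact_nbhds T ->
  compact_subspace T L ->
  separated_in T L ->
  exists U, open_nbhd_of_set T L U /\ hausdorff_subspace T U.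
Proof.
  intros Hlc [HL _] Hsep.
  destruct (quasi_compact_separating_pair (S := L) HL) as [W [U [HW [HU [LW [LU HWU]]]]]].
  { intros x Hx.
    destruct (point_compact_separating_pair x Hlc HL Hsep Hx) as [A [W [HA [HW [Ax [LW HAW]]]]]].
    exists W, A; repeat split; auto using separated_sets_sym. }
  exists (fun y => W y /\ U y); split; [split|].
  - apply open_inter; assumption.
  - intros x Hx; auto.
  - intros y z [Wy _] [_ Uz] Hyz.
    destruct (HWU y z Wy Uz Hyz) as [P [Q [HP [HQ [Py [Qz Hd]]]]]].
    exists P, Q; repeat split; auto.
    intros w _; apply Hd.
Qed.
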